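(* If $G$ is a topological group and $X$ is a $G^\star$-regular space, then $l^*(X)\le t(C_p(X,G))$.
   Context: All spaces are Tychonoff and non-empty; topological groups are Hausdorff; $e$ is the identity of $G$. $C_p(X,G)$ is the group of continuous maps $X\to G$ with pointwise operations and the topology of pointwise convergence. $X$ is $G^\star$-regular if there exists $g\in G\setminus\{e\}$ such that for every closed $F\subseteq X$ and every $x\in X\setminus F$ there is $f\in C_p(X,G)$ with $f(x)=g$ and $f(F)\subseteq\{e\}$. $t(\cdot)$ denotes tightness, $l(\cdot)$ the Lindel\''of number, and $l^*(X)=\sup\{l(X^n):n\in\mathbb{N}\}$. *)

From HB Require Import structures.
From mathcomp Require Import all_boot all_order all_algebra.
From mathcomp Require Import all_classical all_reals.
From mathcomp Require Import topology function_spaces.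
From mathcomp Require Import Rstruct Rstruct_topology.
Set Implicit Arguments. Unset Strict Implicit. Unset Printing Implicit Defensive.
Local Open Scope classical_set_scope.
Local Open Scope card_scope.

Definition tychonoff_space (X : topologicalType) : Prop :=
  hausdorff_space X /\
  forall (F : set X) (x : X), closed F -> ~ F x ->
    exists f : X -> Rdefinitions.R,
      continuous f /\ f x = 0%R /\ (forall y, F y -> f y = 1%R).

Definition topological_group (G : topologicalType)
  (mul : G -> G -> G) (inv : G -> G) (e : G) : Prop :=
  [/\ (forall x y z, mul x (mul y z) = mul (mul x y) z),
      (forall x, mul e x = x /\ mul x e = x),
      (forall x, mul (inv x) x = e /\ mul x (inv x) = e),
      continuous (fun p : G * G => mul p.1 p.2) /\ continuous inv
    & hausdorff_space G].

Definition Cp_set (X G : topologicalType) : set {ptws X -> G} :=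
  [set f | continuous (f : X -> G)].

Definition Gstar_regular (X G : topologicalType) (e : G) : Prop :=
  exists g : G, g <> e /\
    forall (F : set X) (x : X), closed F -> ~ F x ->
      exists f : X -> G, continuous f /\ f x = g /\ (forall y, F y -> f y = e).

(* Cardinals are represented by types: "|A| <= |K|" is A #<= [set: K].
   "K is infinite" means [set: nat] #<= [set: K]. *)
Definition infinite_type (K : Type) : Prop := [set: nat] #<= [set: K].

(* t(S) <= |K| for the subspace S of Y (closure in the subspace S
   is the trace on S of the closure in Y). *)
Definition tightness_le (Y : topologicalType) (S : set Y) (K : Type) : Prop :=
  forall (A : set Y) (y : Y), A `<=` S -> S y -> closure A y ->
    exists B : set Y, [/\ B `<=` A, B #<= [set: K] & closure B y].

Definition lindelof_le (Y : topologicalType) (K : Type) : Prop :=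
  forall C : set (set Y), (forall U, C U -> open U) ->
    \bigcup_(U in C) U = [set: Y] ->
    exists C' : set (set Y),
      [/\ C' `<=` C, C' #<= [set: K] & \bigcup_(U in C') U = [set: Y]].

Definition power_space (X : topologicalType) (n : nat) : topologicalType :=
  {ptws 'I_n -> X}.
Arguments Cp_set : clear implicits.

From HB Require Import structures.
From mathcomp Require Import all_boot all_order all_algebra.
From mathcomp Require Import all_classical all_reals.
From mathcomp Require Import topology function_spaces.
From mathcomp Require Import wochoice.

Local Open Scope classical_set_scope.
Local Open Scope card_scope.

(* Fix an open cover C of X^n.  Call f : X -> G good if the points of X^n all of
   whose coordinates lie in the cozero set {f <> e} are covered by finitely many
   members of C.  For a finite s included in X, the points of the finite grid s^n
   lie in basic boxes inside members of C; G*-regularity glues (by products in G)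
   a continuous f equal to g on s whose cozero set stays inside the faces of these
   boxes, so f is good.  Hence the constant map g is in the pointwise closure of
   the good maps, and t(C_p(X,G)) <= k gives at most k good maps accumulating at
   g.  As g <> e, every point of X^n lies in the cozero power of one of them, so
   their finite subfamilies form a subcover of size at most k * aleph_0 = k.
   That equality comes from Zorn's lemma on the pairs (S, phi) with phi an
   injection of S * nat into S, ordered by extension: a maximal S has finite
   complement. *)

Lemma card_le_injfun {T U : Type} (u0 : U) (A : set T) (B : set U) :
  A #<= B -> exists f : T -> U, f @` A `<=` B /\ {in A &, injective f}.
Proof.
move=> /card_leP[g]; exists (valLR u0 g); split; first by move=> _ [x Ax <-]; exact: funS.
by apply/(valLR_injP u0 g) => x y; apply: inj; rewrite inE.
Qed.

Lemma card_le_of_injective {T U : Type} (A : set T) (B : set U) (f : T -> U) :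
  f @` A `<=` B -> {in A &, injective f} -> A #<= B.
Proof.
move=> fAB finj; have [F] : $|{injfun A >-> B}|.
  by apply/injfunPex; exists f => // x Ax; apply: fAB.
exact: inj_card_le.
Qed.

Section absorbing.
Context {K : Type}.

Definition absorbs (S : set K) (phi : K * nat -> K) :=
  phi @` (S `*` setT) `<=` S /\ {in S `*` setT &, injective phi}.

Lemma absorbs_range {h : nat -> K} : injective h ->
  exists phi, absorbs (range h) phi.
Proof.
move=> hinj; have /card_eqPle[/(card_le_injfun 0%N)[pr [_ prinj]] _] := card_nat2.
have {}prinj : injective pr by move=> a b; apply: prinj; rewrite inE.
have hK : cancel h (pinv [set: nat] h).
  by move=> n; rewrite pinvKV ?inE // => ? ? _ _; exact: hinj.
pose phi a := h (pr (pinv [set: nat] h a.1, a.2)).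
exists phi; split; first by move=> _ [[k m] _ <-]; exists (pr (pinv [set: nat] h k, m)).
move=> [k m] [k' m'] /[!inE] -[/= [n _ <-] _] [/= [n' _ <-] _].
by rewrite /phi /= !hK => /hinj/prinj[-> ->].
Qed.

Lemma absorbsU {S D : set K} {phi psi : K * nat -> K} :
  S `&` D = set0 -> absorbs S phi -> absorbs D psi ->
  absorbs (S `|` D) (fun a => if `[< S a.1 >] then phi a else psi a).
Proof.
move=> SD0 [phiS phiinj] [psiD psiinj].
have phiS' a : S a.1 -> S (phi a) by move=> Sa; apply: phiS; exists a.
have psiD' a : D a.1 -> D (psi a) by move=> Da; apply: psiD; exists a.
have SDF k : S k -> D k -> False by move=> Sk Dk; rewrite -[False]/(set0 k) -SD0.
split.
  move=> _ [[k m] [/= SDk _] <-] /=; case: asboolP => [Sk|nSk]; first by left; exact: phiS'.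
  by right; apply: psiD'; case: SDk.
move=> [k m] [k' m'] /[!inE] -[/= SDk _] [/= SDk' _].
case: asboolP => /= [Sk|nSk]; case: asboolP => /= [Sk'|nSk'].
- by apply: phiinj; rewrite inE.
- have Dk' : D k' by case: SDk'.
  by move=> E; case: (SDF (phi (k, m))); [exact: phiS'|rewrite E; exact: (psiD' (k', m'))].
- have Dk : D k by case: SDk.
  by move=> E; case: (SDF (phi (k', m'))); [exact: phiS'|rewrite -E; exact: (psiD' (k, m))].
- have Dk : D k by case: SDk.
  have Dk' : D k' by case: SDk'.
  by apply: psiinj; rewrite inE.
Qed.

Lemma exists_maximal_absorbing : exists S phi, absorbs S phi /\
  forall S' phi', absorbs S' phi' -> S `<=` S' ->
    (forall a, S a.1 -> phi' a = phi a) -> S' `<=` S.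
Proof.
pose T := {classic (set K * (K * nat -> K))%type}.
pose R : rel T := fun p q =>
  `[< p.1 `<=` q.1 /\ forall a, p.1 a.1 -> q.2 a = p.2 a >].
pose Sabs : {pred T} := fun p => `[< absorbs p.1 p.2 >].
have [|||[S phi] /asboolP absS maxS] := @Zorn's_lemma T R Sabs.
- by move=> p _; apply/asboolP; split.
- move=> q p r _ _ _ /asboolP[pq1 pq2] /asboolP[qr1 qr2]; apply/asboolP; split.
    by move=> k /pq1/qr1.
  by move=> a pa; rewrite qr2 ?pq2//; exact: pq1.
- move=> C sCS /wo_chainW Cch.
  pose SC := [set k | exists2 p, p \in C & p.1 k].
  pose phiC a := if pselect (exists2 p, p \in C & p.1 a.1) is left h
    then (projT1 (cid2 h)).2 a else a.1.
  have phiCE p a : p \in C -> p.1 a.1 -> phiC a = p.2 a.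
    move=> pC pa; rewrite /phiC; case: pselect => [h|[]]; last by exists p.
    case: (cid2 h) => q qC qa /=.
    by case/orP: (Cch p q pC qC) => /asboolP[_ E]; rewrite E.
  exists ((SC, phiC) : T); last first.
    by move=> p pC; apply/asboolP; split=> [k pk|a pa /=]; [exists p|exact: phiCE].
  apply/asboolP; split.
    move=> _ [a [[p pC pa] _] <-]; exists p => //=.
    have /asboolP[phiS _] := sCS p pC.
    by rewrite (phiCE p) //; apply: phiS; exists a.
  move=> a b /[!inE] -[[p pC pa] _] [[q qC qb] _].
  wlog /asboolP[pq1 pq2] : p q a b pC qC pa qb / R p q.
    move=> W; case/orP: (Cch p q pC qC) => [/W|/(W q p b a)]; [exact|].
    by move=> ba ab; apply/esym/ba.
  rewrite /= (phiCE q a qC (pq1 _ pa)) (phiCE q b qC qb).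
  have /asboolP[_ qinj] := sCS q qC.
  by apply: qinj; rewrite inE; split=> //; exact: pq1.
exists S, phi; split=> // S' phi' absS' SS' agree.
by have /asboolP[] := maxS ((S', phi') : T) (asboolT absS') (asboolT (conj SS' agree)).
Qed.

End absorbing.

Lemma exists_absorbing_cofinite (K : Type) :
  exists S phi, @absorbs K S phi /\ finite_set (~` S).
Proof.
have [S [phi [absS maxS]]] := exists_maximal_absorbing (K := K).
exists S, phi; split=> //; apply: contrapT => infC.
have [k0 _] := infinite_setN0 infC.
have /(card_le_injfun k0)[h [hC hinj]] := (infiniteP _).1 infC.
have {}hinj : injective h by move=> n n'; apply: hinj; rewrite inE.
have hS n : ~ S (h n) by apply: hC; exists n.
have [psi abs_h] := absorbs_range hinj.
have SD0 : S `&` range h = set0.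
  by apply/seteqP; split=> // k [Sk [n _ hk]]; apply: (hS n); rewrite hk.
have agree a : S a.1 -> (if `[< S a.1 >] then phi a else psi a) = phi a.
  by move=> Sa; case: asboolP.
have SU := maxS _ _ (absorbsU SD0 absS abs_h) (fun k Sk => or_introl Sk) agree.
by apply: (hS 0%N); apply: SU; right; exists 0%N.
Qed.

Lemma infinite_type_prod_nat {K : Type} : infinite_type K ->
  exists f : K * nat -> K, injective f.
Proof.
move=> infK; have [S [phi [[phiS phiinj] finC]]] := exists_absorbing_cofinite K.
have phiS' k m : S k -> S (phi (k, m)) by move=> Sk; apply: phiS; exists (k, m).
have [s0 Ss0] : S !=set0.
  by apply/set0P/negP => /eqP S0; apply: ((infiniteP _).2 infK); rewrite -setC0 -S0.
have /(card_le_injfun 0%N)[c [_ cinj]] := finite_set_countable finC.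
(* K injects into S, the countable ~` S going to the spare fibre phi (s0, _.+1). *)
pose embed k := if `[< S k >] then phi (k, 0%N) else phi (s0, (c k).+1).
have embedS k : S (embed k) by rewrite /embed; case: asboolP => [Sk|_]; exact: phiS'.
have phi_inj k m k' m' : S k -> S k' -> phi (k, m) = phi (k', m') -> k = k' /\ m = m'.
  by move=> Sk Sk' /phiinj; rewrite !inE => /(_ (conj Sk I) (conj Sk' I)) [-> ->].
have embed_inj : injective embed.
  move=> k k'; rewrite /embed.
  case: asboolP => Sk; case: asboolP => Sk'.
  - by case/phi_inj.
  - by case/phi_inj.
  - by case/phi_inj.
  - by case/phi_inj => // _ [] /cinj; apply; rewrite inE.
exists (fun a => phi (embed a.1, a.2)) => -[k m] [k' m'] /phi_inj /=.
by case=> [//|//|/embed_inj -> ->].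
Qed.

Lemma ptws_cvg_eval {U : Type} {V : topologicalType}
    (F : set_system {ptws U -> V}) (h : {ptws U -> V}) :
  Filter F -> (forall t, (fun f => f t) @ F --> h t) -> F --> h.
Proof.
move=> FF Feval; apply/cvg_sup => t A; rewrite nbhsE => -[B [[W Wop WB] Bh] BA].
rewrite nbhs_filterE; apply: filterS BA _; rewrite -WB.
by apply: Feval; apply: open_nbhs_nbhs; split=> //; rewrite -WB in Bh.
Qed.

Lemma ptws_closure {U : eqType} {V : topologicalType}
    (A : set {ptws U -> V}) (h : {ptws U -> V}) :
  (forall s : seq U, exists2 f, A f & {in s, f =1 h}) -> closure A h.
Proof.
move=> Aapprox; rewrite closureEcvg.
pose B (s : seq U) := [set f : {ptws U -> V} | A f /\ {in s, f =1 h}].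
have FB : Filter (filter_from setT B).
  apply: filter_fromT_filter; first by exists [::].
  move=> s s'; exists (s ++ s') => f [Af fh].
  by split; split=> // x xs; apply: fh; rewrite mem_cat xs ?orbT.
exists (filter_from setT B).
  by apply: filter_from_proper => s _; have [f Af fh] := Aapprox s; exists f.
split; last by move=> P AP; exists [::] => // f [Af _]; exact: AP.
apply: ptws_cvg_eval => t W htW; exists [:: t] => // f [_ fh] /=.
by rewrite fh ?mem_head //; exact: nbhs_singleton.
Qed.

Lemma ptws_nbhs_box {I : eqType} {X : topologicalType}
    (t : {ptws I -> X}) (U : set {ptws I -> X}) :
  nbhs t U -> exists O : I -> set X,
    (forall i, open_nbhs (t i) (O i)) /\ [set s | forall i, O i (s i)] `<=` U.
Proof.
move=> tU.
pose D := [set O : I -> set X | forall i, open_nbhs (t i) (O i)].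
pose B (O : I -> set X) := [set s : {ptws I -> X} | forall i, O i (s i)].
have FB : Filter (filter_from D B).
  apply: filter_from_filter; first by exists (fun _ => setT) => i; split=> //; exact: openT.
  move=> O1 O2 DO1 DO2; exists (fun i => O1 i `&` O2 i).
    by move=> i; apply: open_nbhsI; [exact: DO1|exact: DO2].
  by move=> s Os; split=> i; have [] := Os i.
have : filter_from D B --> t.
  apply: ptws_cvg_eval => i W; rewrite nbhsE => -[O [Oop Oti] OW].
  exists (fun j => if j == i then O else setT).
    by move=> j; case: eqP => [->|_]; split=> //; exact: openT.
  by move=> s /(_ i); rewrite eqxx => /OW.
by move=> /(_ U tU) [O DO BO]; exists O.
Qed.

Lemma grid_cover {I : finType} {X : topologicalType}
    {C : set (set {ptws I -> X})} (s : seq X) :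
  hausdorff_space X -> (forall U, C U -> open U) ->
  (forall y, exists U, C U /\ U y) ->
  exists (V : X -> set X) (l : seq (set {ptws I -> X})),
    [/\ forall x, x \in s -> open_nbhs x (V x),
        {in s &, forall x z, x <> z -> ~ V x z},
        (forall U, U \in l -> C U) &
        forall y : {ptws I -> X}, (forall i, exists2 x, x \in s & V x (y i)) ->
          exists2 U, U \in l & U y].
Proof.
move=> hausX Copen Ccov; pose pt (j : 'I_(size s)) := tnth (in_tuple s) j.
have pt_onto x : x \in s -> exists j, pt j = x.
  by move=> xs; have /tnthP[j ->] : x \in in_tuple s by []; exists j.
pose grid (k : {ffun I -> 'I_(size s)}) : {ptws I -> X} := fun i => pt (k i).
have [Uk UkP] := choice (fun k => Ccov (grid k)).
have /choice[O OP] : forall k, exists O : I -> set X,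
    (forall i, open_nbhs (grid k i) (O i)) /\
    [set y : {ptws I -> X} | forall i, O i (y i)] `<=` Uk k.
  move=> k; apply: ptws_nbhs_box; apply: open_nbhs_nbhs.
  by have [CU Uy] := UkP k; split=> //; exact: Copen.
(* [V x] meets the box faces of the grid points at x and avoids the rest of s. *)
pose V x := [set z | (forall p : {ffun I -> 'I_(size s)} * I, pt (p.1 p.2) = x -> O p.1 p.2 z)
  /\ forall j, pt j <> x -> z <> pt j].
exists V, [seq Uk k | k <- enum {ffun I -> 'I_(size s)}]; split.
- move=> x xs; split; last first.
    by split=> [[k i] /= <-|j ptjx /esym//]; have [/(_ i)[]] := OP k.
  rewrite openE => z [Oz ptz]; rewrite /interior.
  have Onear : \forall w \near z, forall p : {ffun I -> 'I_(size s)} * I,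
      pt (p.1 p.2) = x -> O p.1 p.2 w.
    apply: filter_forall => -[k i] /=; have [/(_ i)[Oop _] _] := OP k.
    have [ptx|ptx] := pselect (pt (k i) = x); last by apply: nearW => w /ptx.
    by apply: filterS (open_nbhs_nbhs (conj Oop (Oz (k, i) ptx))) => w Ow _.
  have ptnear : \forall w \near z, forall j, pt j <> x -> w <> pt j.
    apply: filter_forall => j; have [ptx|ptx] := pselect (pt j = x).
      by apply: nearW => w /(_ ptx).
    have op : open (~` [set pt j]).
      exact/closed_openC/accessible_closed_set1/hausdorff_accessible.
    by apply: filterS (open_nbhs_nbhs (conj op (ptz j ptx))) => w wj _.
  by apply: filterS (filterI Onear ptnear) => w [].
- move=> x z xs zs xz; rewrite /V => -[_ Vxz]; have [j ptj] := pt_onto z zs.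
  by apply: (Vxz j); rewrite ptj // => /esym.
- by move=> U /mapP[k _ ->]; have [] := UkP k.
move=> y yV.
have /choice[x xP] : forall i, exists x, x \in s /\ V x (y i).
  by move=> i; have [x xs Vx] := yV i; exists x.
have /choice[j jP] : forall i, exists j, pt j = x i by move=> i; apply: pt_onto; case: (xP i).
exists (Uk [ffun i => j i]); first by apply: map_f; rewrite mem_enum.
have [_ OU] := OP [ffun i => j i]; apply: OU => i.
by have [_ [Ox _]] := xP i; apply: (Ox (_, i)); rewrite /= ffunE.
Qed.

Section regular_functions.
Context {G X : topologicalType} (mul : G -> G -> G) (e g : G).
Hypothesis mul_continuous : continuous (fun p : G * G => mul p.1 p.2).
Hypothesis mul1g : forall x, mul e x = x.
Hypothesis mulg1 : forall x, mul x e = x.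
Hypothesis regular : forall (F : set X) x, closed F -> ~ F x ->
  exists f : X -> G, continuous f /\ f x = g /\ (forall y, F y -> f y = e).

Lemma continuous_mul_fun (f1 f2 : X -> G) : continuous f1 -> continuous f2 ->
  continuous (fun y => mul (f1 y) (f2 y)).
Proof.
move=> f1c f2c y.
by apply: continuous2_cvg; [exact: (mul_continuous (f1 y, f2 y))|exact: f1c|exact: f2c].
Qed.

Lemma exists_fun_cozero_sub (s : seq X) (V : X -> set X) : uniq s ->
  (forall x, x \in s -> open_nbhs x (V x)) -> {in s &, forall x z, x <> z -> ~ V x z} ->
  exists f : X -> G, [/\ continuous f, {in s, forall x, f x = g} &
    forall y, f y <> e -> exists2 x, x \in s & V x y].
Proof.
elim: s => [|x s IHs] /=.
  by move=> _ _ _; exists (fun=> e); split=> //; exact: cst_continuous.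
move=> /andP[xNs s_uniq] V_nbhs V_sep.
have [z zs|z z' zs z's|f1 [f1c f1s f1V]] := IHs s_uniq.
- by apply: V_nbhs; rewrite inE zs orbT.
- by apply: V_sep; rewrite inE ?zs ?z's orbT.
have [Vop Vx] := V_nbhs x (mem_head _ _).
have [f0 [f0c [f0x f0V]]] := regular _ x (open_closedC Vop) (fun nVx => nVx Vx).
have sepx z : z \in s -> ~ V x z /\ ~ V z x.
  move=> zs; have xz : x <> z by move=> xz; rewrite xz zs in xNs.
  by split; apply: V_sep; rewrite ?inE ?zs ?orbT ?eqxx // => /esym.
exists (fun y => mul (f0 y) (f1 y)); split; first exact: continuous_mul_fun.
  move=> z; rewrite inE => /predU1P[->|zs].
    have -> : f1 x = e by apply: contrapT => /f1V[w ws Vwx]; case: (sepx w ws).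
    by rewrite f0x mulg1.
  by rewrite f1s // f0V ?mul1g //; case: (sepx z zs).
move=> y fy; have [Vxy|nVxy] := pselect (V x y); first by exists x; rewrite ?mem_head.
have [|z zs Vzy] := f1V y; first by move=> f1y; apply: fy; rewrite f1y f0V.
by exists z; rewrite // inE zs orbT.
Qed.

Definition covers_cozero_power {I : Type} (f : X -> G) (l : seq (set {ptws I -> X})) :=
  forall y : {ptws I -> X}, (forall i, f (y i) <> e) -> exists2 U, U \in l & U y.

Lemma cst_closure_finite_subcover {I : finType} {C : set (set {ptws I -> X})} :
  hausdorff_space X -> (forall U, C U -> open U) -> (forall y, exists U, C U /\ U y) ->
  closure [set f : {ptws X -> G} | continuous f /\
    exists2 l, (forall U, U \in l -> C U) & covers_cozero_power f l] (fun=> g).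
Proof.
move=> hausX Copen Ccov; apply: ptws_closure => s.
have [V [l [V_nbhs V_sep lC lcover]]] := grid_cover s hausX Copen Ccov.
have [x xs|x z xs zs|f [fc fs fV]] := exists_fun_cozero_sub _ V (undup_uniq s).
- by apply: V_nbhs; rewrite -mem_undup.
- by apply: V_sep; rewrite -mem_undup.
exists f => [|x xs]; last by apply: fs; rewrite mem_undup.
split=> //; exists l => // y yf; apply: lcover => i.
by have [x] := fV _ (yf i); rewrite mem_undup; exists x.
Qed.

End regular_functions.

Lemma card_seq_bigcup_le {T : Type} {U : eqType} (B : set T) (l : T -> seq U) :
  [set u | exists2 t, B t & u \in l t] #<= B `*` [set: nat].
Proof.
have -> : [set u | exists2 t, B t & u \in l t] =
    snd @` [set p : T * U | B p.1 /\ p.2 \in l p.1].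
  by apply/seteqP; split=> [u [t Bt ut]|_ [[t u] [Bt ut] <-]]; [exists (t, u)|exists t].
apply: card_le_trans (card_image_le _ _) _.
apply: (@card_le_of_injective _ _ _ _ (fun p => (p.1, index p.2 (l p.1)))).
  by move=> _ [[t u] [Bt _] <-].
move=> [t u] [t' u'] /[!inE] -[_ ut] [_ ut'] [tt' /(congr1 (nth u (l t)))].
by subst t'; rewrite !nth_index // => ->.
Qed.

Lemma card_setX_nat_le {T K : Type} (B : set T) : infinite_type K ->
  B #<= [set: K] -> B `*` [set: nat] #<= [set: K].
Proof.
move=> infK BK; have [psi psi_inj] := infinite_type_prod_nat infK.
have [k0 _] := infinite_setN0 ((infiniteP _).2 infK).
have [b [_ b_inj]] := card_le_injfun k0 _ _ BK.
apply: (@card_le_of_injective _ _ _ _ (fun p => psi (b p.1, p.2))) => //.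
move=> [t m] [t' m'] /[!inE] -[Bt _] [Bt' _] /psi_inj[/b_inj + ->].
by rewrite !inE => /(_ Bt Bt') ->.
Qed.

Theorem lemma7p3 (G : topologicalType) (mul : G -> G -> G) (inv : G -> G)
  (e : G) (X : topologicalType) :
  topological_group mul inv e -> tychonoff_space X -> Gstar_regular X e ->
  forall K : Type, infinite_type K ->
  tightness_le (Cp_set X G) K ->
  forall n : nat, lindelof_le (power_space X n) K.
Proof.
move=> [_ mul1 _ [mulc _] hausG] [hausX _] [g [ge reg]] K infK tight n C Copen.
move=> /seteqP[_ Ccov]; have {}Ccov y : exists U, C U /\ U y.
  by have [U CU Uy] := Ccov y I; exists U.
have clA := cst_closure_finite_subcover mul e g mulc (fun x => (mul1 x).1)
  (fun x => (mul1 x).2) reg hausX Copen Ccov.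
have [B [BA BK clB]] := tight _ _ (fun f (Af : _ /\ _) => Af.1) (@cst_continuous X G g) clA.
have /choice[l lP] : forall f, exists l, B f ->
    (forall U, U \in l -> C U) /\ covers_cozero_power e f l.
  move=> f; have [Bf|nBf] := pselect (B f); last by exists [::] => /nBf.
  by have [_ [l lC lcov]] := BA f Bf; exists l.
exists [set U | exists2 f, B f & U \in l f]; split.
- by move=> U [f Bf Ul]; exact: (lP f Bf).1.
- apply: card_le_trans (card_seq_bigcup_le B l) _.
  exact: card_setX_nat_le infK BK.
apply/seteqP; split=> // y _.
have hy : nbhs ((fun=> g) : {ptws X -> G}) [set f : {ptws X -> G} | forall i, f (y i) <> e].
  apply: (@filter_forall _ _ (fun i (f : {ptws X -> G}) => f (y i) <> e) (nbhs _)) => i.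
  apply: (@proj_continuous X (fun=> G) (y i) (fun=> g) (~` [set e])).
  apply: open_nbhs_nbhs; split=> //.
  exact/closed_openC/accessible_closed_set1/hausdorff_accessible.
have [f [Bf fy]] := clB _ hy.
by have [U Ul Uy] := (lP f Bf).2 y fy; exists U => //; exists f.
Qed.
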